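(* Let $N\ge1$ and let the parameter space $\Theta$ of the correlated Bernoulli random graph model be nondegenerate. Suppose $S:\mathcal{X}\to\mathbb{R}$ is an unbiased estimator of $g(\theta)$ and $S':\mathcal{X}\to\mathbb{R}$ is an unbiased estimator of $g'(\theta)$, where $g,g':\Theta\to\mathbb{R}$. Then for any $a,b\in\mathbb{R}$, $a\overline{S}+b\overline{S'}$ is the UMVU estimator of $ag(\theta)+bg'(\theta)$. Moreover, $a\overline{S}+b\overline{S'}$ is balanced, $\overline{S}\cdot\overline{S'}$ is balanced, and (if $\overline{S'}$ is nowhere zero) $\overline{S}/\overline{S'}$ is balanced.
   Context: Correlated Bernoulli random graph model: fix a positive integer $N$ and let $\mathcal{R}=\{(p_1,\dots,p_N,\varrho_1,\dots,\varrho_N): p_i,\varrho_i\in[0,1]\}$; a parameter space is any $\Theta\subseteq\mathcal{R}$. For $\theta\in\Theta$, the pairs $(X_i,Y_i)$, $i=1,\dots,N$, of $\{0,1\}$-valued random variables are independent, $X_i,Y_i$ are marginally Bernoulli$(p_i)$ with Pearson correlation $\varrho_i$. Sample space $\mathcal{X}=\{(x,y):x,y\in\{0,1\}^N\}$. Let $\mathcal{R}^o=\{(p_1,\dots,p_N,0,\dots,0):p_i\in\mathbb{R}\}$; $\Theta$ is nondegenerate if $\Theta\cap\mathcal{R}^o$ has an interior point relative to $\mathcal{R}^o$. The disagreement vector $\mathcal{H}:\mathcal{X}\to\{0,\star,1\}^N$ has $i$th component $1$ if $x_i=y_i=1$, $0$ if $x_i=y_i=0$, $\star$ if $x_i\neq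 y_i$; $\mathcal{X}_h=\mathcal{H}^{-1}(h)$. The balanced variant of a statistic $S$ is $\overline{S}(x,y)=\frac{1}{|\mathcal{X}_h|}\sum_{(x',y')\in\mathcal{X}_h}S(x',y')$ with $h=\mathcal{H}(x,y)$; $S$ is called balanced if $S=\overline{S}$, i.e. $S$ is constant on each $\mathcal{X}_h$. An estimator $S$ is unbiased for $g$ if $\mathbb{E}_\theta S=g(\theta)$ for all $\theta\in\Theta$; UMVU means unbiased with minimum variance among unbiased estimators for every $\theta\in\Theta$. *)

From mathcomp Require Import all_boot all_order all_algebra.
From mathcomp Require Import reals.
Set Implicit Arguments. Unset Strict Implicit. Unset Printing Implicit Defensive.
Import Order.TTheory GRing.Theory Num.Theory.
Local Open Scope ring_scope.

Section CBRG.
Variables (R : realType) (N : nat).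

(* parameter theta = (p_1..p_N, rho_1..rho_N) *)
Definition param := ({ffun 'I_N -> R} * {ffun 'I_N -> R})%type.

(* sample space X = {(x,y) : x,y in {0,1}^N}, 1 = true *)
Definition sample := ({ffun 'I_N -> bool} * {ffun 'I_N -> bool})%type.

Definition in_Rspace (th : param) : Prop :=
  forall i, 0 <= th.1 i <= 1 /\ 0 <= th.2 i <= 1.

(* Theta nondegenerate: Theta ∩ R^o has an interior point relative to R^o
   (R^o identified with R^N via p, with the sup-norm topology). *)
Definition nondegenerate_param (Theta : param -> Prop) : Prop :=
  exists (p0 : {ffun 'I_N -> R}) (eps : R), 0 < eps /\
    forall p : {ffun 'I_N -> R}, (forall i, `|p i - p0 i| < eps) ->
      Theta (p, [ffun=> 0]).

(* joint law of a pair (X_i,Y_i), marginals Bernoulli(p), correlation rho *)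
Definition pair_prob (p rho : R) (a b : bool) : R :=
  match a, b with
  | true, true => p ^+ 2 + rho * p * (1 - p)
  | false, false => (1 - p) ^+ 2 + rho * p * (1 - p)
  | _, _ => p * (1 - p) * (1 - rho)
  end.

Definition pmf (th : param) (z : sample) : R :=
  \prod_(i < N) pair_prob (th.1 i) (th.2 i) (z.1 i) (z.2 i).

Definition expect (th : param) (S : sample -> R) : R :=
  \sum_(z : sample) S z * pmf th z.

Definition variance (th : param) (S : sample -> R) : R :=
  expect th (fun z => (S z - expect th S) ^+ 2).

Definition unbiased (Theta : param -> Prop) (S : sample -> R) (g : param -> R) :=
  forall th, Theta th -> expect th S = g th.

Definition UMVU (Theta : param -> Prop) (S : sample -> R) (g : param -> R) :=
  unbiased Theta S g /\
  forall T : sample -> R, unbiased Theta T g ->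
    forall th, Theta th -> variance th S <= variance th T.

(* disagreement vector: Some true = 1, Some false = 0, None = star *)
Definition disagree (z : sample) : {ffun 'I_N -> option bool} :=
  [ffun i => if z.1 i == z.2 i then Some (z.1 i) else None].

Definition fiber (h : {ffun 'I_N -> option bool}) : {set sample} :=
  [set z | disagree z == h].

Definition balanced_variant (S : sample -> R) (z : sample) : R :=
  (#|fiber (disagree z)|%:R)^-1 * \sum_(z' in fiber (disagree z)) S z'.

Definition balanced (S : sample -> R) : Prop :=
  S = balanced_variant S.

End CBRG.

(* The disagreement vector H is a complete sufficient statistic, and the claim
   is the Lehmann-Scheffe theorem for it.
   Sufficiency: the pmf depends on z only through H z, so the balanced variant
   (the mean over the fiber of H) has the same expectation and, its residual
   being orthogonal to every function of H, no larger variance.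
   Completeness: at rho = 0 the probability of a cell is (1 - p)^2 times the
   odds p / (1 - p) raised to 2, 1 or 0.  Multiplying the odds of an interior
   point p0 of Theta by u^(3^i) in coordinate i turns E U, up to a positive
   factor, into a polynomial in u whose coefficient of u^(base-3 code of h) is a
   positive multiple of the value of U on the fiber of h.  For u close to 1
   these parameters lie in Theta, so the polynomial vanishes on an interval,
   hence identically.  Linear combinations, products and quotients of balanced
   variants are functions of H, hence balanced. *)

From mathcomp Require Import all_boot all_order all_algebra.
From mathcomp Require Import reals.
From mathcomp Require Import ring lra.
From mathcomp Require Import boolp.
Import Order.TTheory GRing.Theory Num.Theory.
Local Open Scope ring_scope.
Set Implicit Arguments. Unset Strict Implicit. Unset Printing Implicit Defensive.

Section Sufficiency.
Variables (R : realType) (N : nat).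
Local Notation pattern := {ffun 'I_N -> option bool}.
Implicit Types (T : sample N -> R) (th : param R N) (z : sample N) (h : pattern).

Definition disagree_measurable T : Prop :=
  exists F : pattern -> R, forall z, T z = F (disagree z).

Definition fiber_mean T h : R := (#|fiber h|%:R)^-1 * \sum_(z in fiber h) T z.

Lemma balanced_variantE T z : balanced_variant T z = fiber_mean T (disagree z).
Proof. by []. Qed.

Lemma balanced_variant_measurable T : disagree_measurable (balanced_variant T).
Proof. by exists (fiber_mean T). Qed.

Lemma disagree_measurable_op2 (op : R -> R -> R) T T' :
  disagree_measurable T -> disagree_measurable T' ->
  disagree_measurable (fun z => op (T z) (T' z)).
Proof.
by move=> [F hF] [F' hF']; exists (fun h => op (F h) (F' h)) => z; rewrite hF hF'.
Qed.

Lemma sum_fiber_const h (c : R) :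
  \sum_(z in fiber h) c = #|fiber h|%:R * c.
Proof. by rewrite sumr_const mulr_natl. Qed.

Lemma sum_fiber_mean T h :
  \sum_(z in fiber h) fiber_mean T h = \sum_(z in fiber h) T z.
Proof.
rewrite sum_fiber_const /fiber_mean mulrA.
have [/cards0_eq-> | nz] := eqVneq #|fiber h| 0%N; first by rewrite big_set0 mulr0.
by rewrite mulfV ?mul1r // pnatr_eq0.
Qed.

Lemma card_fiber_disagree_gt0 z : (0 < #|fiber (disagree z)|)%N.
Proof. by apply/card_gt0P; exists z; rewrite inE. Qed.

Lemma measurable_balanced T : disagree_measurable T -> balanced T.
Proof.
move=> [F hF]; apply: funext => z.
rewrite /balanced_variant (eq_bigr (fun=> T z)); last first.
  by move=> z'; rewrite inE => /eqP e; rewrite !hF e.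
by rewrite sum_fiber_const mulrA mulVf ?mul1r // pnatr_eq0 -lt0n card_fiber_disagree_gt0.
Qed.

Lemma sum_by_fiber (G : sample N -> R) :
  \sum_z G z = \sum_h \sum_(z in fiber h) G z.
Proof.
rewrite (partition_big (@disagree N) predT) //=.
by apply: eq_bigr => h _; apply: eq_bigl => z; rewrite inE.
Qed.

Lemma sum_residual_measurable T W : disagree_measurable W ->
  \sum_z (T z - balanced_variant T z) * W z = 0.
Proof.
move=> [F hF]; rewrite sum_by_fiber big1 // => h _.
rewrite (eq_bigr (fun z => (T z - fiber_mean T h) * F h)); last first.
  by move=> z; rewrite inE hF balanced_variantE => /eqP ->.
by rewrite -mulr_suml sumrB sum_fiber_mean subrr mul0r.
Qed.

Definition cell_prob (p rho : R) (d : option bool) : R :=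
  if d is Some a then pair_prob p rho a a else pair_prob p rho true false.

Lemma pmfE th z : pmf th z = \prod_i cell_prob (th.1 i) (th.2 i) (disagree z i).
Proof. by apply: eq_bigr => i _; rewrite ffunE; case: (z.1 i); case: (z.2 i). Qed.

Lemma pmf_measurable th : disagree_measurable (pmf th).
Proof. by exists (fun h => \prod_i cell_prob (th.1 i) (th.2 i) (h i)); apply: pmfE. Qed.

Lemma pair_prob_ge0 (p rho : R) a b : 0 <= p <= 1 -> 0 <= rho <= 1 ->
  0 <= pair_prob p rho a b.
Proof.
move=> /andP[p0 p1] /andP[r0 r1].
have pq : 0 <= p * (1 - p) by apply: mulr_ge0; lra.
have rpq : 0 <= rho * p * (1 - p) by rewrite -mulrA; apply: mulr_ge0.
have pqr : 0 <= p * (1 - p) * (1 - rho) by apply: mulr_ge0; lra.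
have := sqr_ge0 p; have := sqr_ge0 (1 - p).
by case: a; case: b => /=; lra.
Qed.

Lemma pmf_ge0 th z : in_Rspace th -> 0 <= pmf th z.
Proof.
move=> hth; apply: prodr_ge0 => i _.
by case: (hth i) => ? ?; apply: pair_prob_ge0.
Qed.

Lemma expectB th T T' : expect th (fun z => T z - T' z) = expect th T - expect th T'.
Proof. by rewrite /expect -sumrB; apply: eq_bigr => z _; rewrite mulrBl. Qed.

Lemma expect_lincomb th T T' (a b : R) :
  expect th (fun z => a * T z + b * T' z) = a * expect th T + b * expect th T'.
Proof. by rewrite /expect !mulr_sumr -big_split; apply: eq_bigr => z _ /=; ring. Qed.

Lemma expect_balanced_variant th T :
  expect th (balanced_variant T) = expect th T.
Proof.
apply/eqP; rewrite -subr_eq0 /expect -sumrB; apply/eqP.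
rewrite -[RHS]oppr0 -[in RHS](sum_residual_measurable T (pmf_measurable th)) -sumrN.
by apply: eq_bigr => z _; ring.
Qed.

Lemma variance_balanced_variant th T : in_Rspace th ->
  variance th (balanced_variant T) <= variance th T.
Proof.
move=> hth; rewrite /variance expect_balanced_variant.
set m := expect th T; set Tb := balanced_variant T.
have W_meas : disagree_measurable (fun z => 2 * (Tb z - m) * pmf th z).
  apply: (disagree_measurable_op2 (fun x y => 2 * (x - m) * y)).
    exact: balanced_variant_measurable.
  exact: pmf_measurable.
have pythagoras : expect th (fun z => (T z - m) ^+ 2) =
    expect th (fun z => (Tb z - m) ^+ 2) + \sum_z (T z - Tb z) ^+ 2 * pmf th z +
    \sum_z (T z - Tb z) * (2 * (Tb z - m) * pmf th z).
  by rewrite /expect -!big_split; apply: eq_bigr => z _ /=; ring.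
rewrite pythagoras sum_residual_measurable // addr0 lerDl.
by apply: sumr_ge0 => z _; apply: mulr_ge0; [apply: sqr_ge0 | apply: pmf_ge0].
Qed.

End Sufficiency.

Lemma expansion_inj (b n : nat) (f g : 'I_n -> nat) :
  (forall i, f i < b)%N -> (forall i, g i < b)%N ->
  (\sum_(i < n) f i * b ^ i = \sum_(i < n) g i * b ^ i)%N -> f =1 g.
Proof.
elim: n f g => [|n IH] f g hf hg; first by move=> _ [].
have b_gt0 : (0 < b)%N by apply: leq_ltn_trans (hf ord0).
have tail F : (\sum_(i < n) F (lift ord0 i) * b ^ lift ord0 i =
               \sum_(i < n) F (lift ord0 i) * b ^ i * b)%N.
  by apply: eq_bigr => i _; rewrite /= expnSr mulnA.
have modD x X : (x < b)%N -> ((x + X * b) %% b = x)%N.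
  by move=> xb; rewrite addnC modnMDl modn_small.
have divD x X : (x < b)%N -> ((x + X * b) %/ b = X)%N.
  by move=> xb; rewrite addnC divnMDl // divn_small // addn0.
rewrite !big_ord_recl !tail -!big_distrl /= expn0 !muln1 => e.
move: (congr1 (modn^~ b) e) (congr1 (divn^~ b) e).
rewrite !modD ?divD ?hf ?hg // => e0 e1.
move=> j; case: (unliftP ord0 j) => [k ->|-> //].
by apply: (IH (f \o lift ord0) (g \o lift ord0) _ _ e1) => i; [apply: hf | apply: hg].
Qed.

Lemma poly_eq0_on_interval (F : realFieldType) (P : {poly F}) (a b : F) :
  a < b -> (forall u, a < u <= b -> P.[u] = 0) -> P = 0.
Proof.
move=> ab P0; apply/eqP; apply: contraT => P_neq0.
pose M := size P.
have M_gt0 : 0 < M%:R :> F by rewrite ltr0n lt0n size_poly_eq0.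
pose step := (b - a) / M%:R.
have step_gt0 : 0 < step by apply: divr_gt0; rewrite ?subr_gt0.
have M_step : M%:R * step = b - a by rewrite mulrC divfK ?lt0r_neq0.
pose rs := [seq a + j.+1%:R * step | j <- iota 0 M].
suff : (size rs < M)%N by rewrite size_map size_iota ltnn.
apply: max_poly_roots P_neq0 _ _.
  apply/allP => r /mapP[j]; rewrite mem_iota add0n => /andP[_ jM] ->.
  apply/eqP; apply: P0; rewrite ltrDl mulr_gt0 ?ltr0n //= -lerBrDl -M_step.
  by rewrite ler_wpM2r ?ler_nat // ltW.
rewrite map_inj_uniq ?iota_uniq // => i j /addrI /(mulIf (lt0r_neq0 step_gt0)).
by move/eqP; rewrite eqr_nat => /eqP [].
Qed.

Lemma bernoulli_le (F : realFieldType) (u : F) k : 0 <= u <= 1 -> 1 - u ^+ k <= k%:R * (1 - u).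
Proof.
move=> /andP[u0 u1]; elim: k => [|k IH]; first by rewrite expr0 subrr mul0r.
have : 0 <= u ^+ k <= 1 by rewrite exprn_ge0 ?exprn_ile1.
rewrite exprS -natr1; nra.
Qed.

Section OddsTilt.
Variables (R : realType) (N : nat).
Local Notation pattern := {ffun 'I_N -> option bool}.
Implicit Types (h : pattern).

(* The exponent of the odds [p / (1 - p)] in [cell_prob p 0 d / (1 - p) ^+ 2]. *)
Definition cell_degree (d : option bool) : nat :=
  if d is Some a then (a.*2)%N else 1%N.

Definition pattern_code h : nat := (\sum_(i < N) cell_degree (h i) * 3 ^ i)%N.

Lemma pattern_code_inj : injective pattern_code.
Proof.
have deg_lt3 d : (cell_degree d < 3)%N by case: d => [[]|].
have deg_inj : injective cell_degree by do 2![case=> [[]|]].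
move=> h h' /expansion_inj e; apply/ffunP => i.
by apply: deg_inj; apply: e.
Qed.

(* Multiplies the odds [x / (1 - x)] by [w]. *)
Definition odds_tilt (x w : R) : R := x * w / (1 - x + x * w).

Lemma cell_prob_odds_tilt x w d : 0 < x < 1 -> 0 <= w ->
  cell_prob (odds_tilt x w) 0 d =
  cell_prob x 0 d * w ^+ cell_degree d / (1 - x + x * w) ^+ 2.
Proof.
move=> /andP[x0 x1] w0.
have xw : 0 <= x * w by apply: mulr_ge0; lra.
have D_neq0 : 1 - x + x * w != 0 by apply/negP => /eqP; lra.
by rewrite /odds_tilt; case: d => [[]|] /=; field.
Qed.

Lemma odds_tilt_dist x w : 0 < x < 1 -> 0 <= w <= 1 -> `|odds_tilt x w - x| <= 1 - w.
Proof.
move=> /andP[x0 x1] /andP[w0 w1].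
have xw : 0 <= x * w by apply: mulr_ge0; lra.
have D_gt0 : 0 < 1 - x + x * w by lra.
have -> : odds_tilt x w - x = - (x * (1 - x) * (1 - w) / (1 - x + x * w)).
  by rewrite /odds_tilt; field; lra.
rewrite normrN ger0_norm; last by apply: divr_ge0; [apply: mulr_ge0; nra | lra].
rewrite ler_pdivrMr //.
have : 0 <= (1 - x) * (1 - w) by apply: mulr_ge0; lra.
have : 0 <= x * w * (1 - w) by apply: mulr_ge0; lra.
nra.
Qed.

Lemma cell_prob0_gt0 (p : R) d : 0 < p < 1 -> 0 < cell_prob p 0 d.
Proof.
move=> /andP[p0 p1]; have pq : 0 < p * (1 - p) by apply: mulr_gt0; lra.
by case: d => [[]|] /=; nra.
Qed.

Lemma nondegenerate_center_interior (Theta : param R N -> Prop) p0 (eps : R) :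
  (forall th, Theta th -> in_Rspace th) -> 0 < eps ->
  (forall p : {ffun 'I_N -> R}, (forall i, `|p i - p0 i| < eps) -> Theta (p, [ffun=> 0])) ->
  forall i, 0 < p0 i < 1.
Proof.
move=> hTheta eps_gt0 ball i.
have shift c : `|c| < eps -> 0 <= p0 i + c <= 1.
  move=> c_lt; pose p := [ffun j => p0 j + (j == i)%:R * c].
  have : Theta (p, [ffun=> 0]).
    apply: ball => j; rewrite ffunE addrAC subrr add0r.
    by case: (j == i); rewrite ?mul1r ?mul0r ?normr0.
  by move=> /hTheta /(_ i) [+ _]; rewrite /= ffunE eqxx mul1r.
have half : `|eps / 2| < eps by rewrite ger0_norm; lra.
have := shift _ half; have := shift (- (eps / 2)); rewrite normrN => /(_ half).
lra.
Qed.

End OddsTilt.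

Section TiltedFamily.
Variables (R : realType) (N : nat) (p0 : {ffun 'I_N -> R}).
Hypothesis p0_interior : forall i, 0 < p0 i < 1.
Local Notation pattern := {ffun 'I_N -> option bool}.
Implicit Types (U : sample N -> R) (z : sample N) (h : pattern).

Definition tilted_param (u : R) : param R N :=
  ([ffun i => odds_tilt (p0 i) (u ^+ (3 ^ i))], [ffun=> 0]).

Definition tilt_weight h : R := \prod_i cell_prob (p0 i) 0 (h i).

Definition tilt_normalizer (u : R) : R := \prod_i (1 - p0 i + p0 i * u ^+ (3 ^ i)) ^+ 2.

Definition tilted_poly U : {poly R} :=
  \sum_z (U z * tilt_weight (disagree z)) *: 'X^(pattern_code (disagree z)).

Lemma tilt_weight_gt0 h : 0 < tilt_weight h.
Proof. by apply: prodr_gt0 => i _; apply: cell_prob0_gt0. Qed.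

Lemma tilt_normalizer_gt0 u : 0 <= u -> 0 < tilt_normalizer u.
Proof.
move=> u0; apply: prodr_gt0 => i _; apply: exprn_gt0.
have /andP[p_gt0 p_lt1] := p0_interior i.
have : 0 <= p0 i * u ^+ (3 ^ i) by apply: mulr_ge0; [apply: ltW | apply: exprn_ge0].
lra.
Qed.

Lemma pmf_tilted_param u z : 0 <= u ->
  pmf (tilted_param u) z =
  tilt_weight (disagree z) * u ^+ pattern_code (disagree z) / tilt_normalizer u.
Proof.
move=> u0; rewrite pmfE.
under eq_bigr => i _ do rewrite !ffunE cell_prob_odds_tilt ?p0_interior ?exprn_ge0 //.
rewrite !big_split /= prodfV -prodrXr; congr (_ * _ * _).
all: by apply: eq_bigr => i _; rewrite ffunE // mulnC exprM.
Qed.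

Lemma expect_tilted_param U u : 0 <= u ->
  expect (tilted_param u) U = (tilted_poly U).[u] / tilt_normalizer u.
Proof.
move=> u0; rewrite /expect /tilted_poly horner_sum mulr_suml.
by apply: eq_bigr => z _; rewrite hornerZ hornerXn pmf_tilted_param //; ring.
Qed.

Lemma tilted_param_dist u i : 0 <= u <= 1 ->
  `|(tilted_param u).1 i - p0 i| <= (3 ^ N)%:R * (1 - u).
Proof.
move=> /andP[u0 u1]; have w01 : 0 <= u ^+ (3 ^ i) <= 1 by rewrite exprn_ge0 ?exprn_ile1.
rewrite ffunE; apply: le_trans (odds_tilt_dist (p0_interior i) w01) _.
apply: le_trans (bernoulli_le _ _) _; first by rewrite u0.
by rewrite ler_wpM2r ?subr_ge0 // ler_nat leq_pexp2l // ltnW.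
Qed.

Lemma tilted_poly_eq0 U : disagree_measurable U -> tilted_poly U = 0 -> forall z, U z = 0.
Proof.
move=> [F hF] P0 z0; set h0 := disagree z0.
have := congr1 (fun P : {poly R} => P`_(pattern_code h0)) P0; rewrite coef0 coef_sum.
rewrite (eq_bigr (fun z => if z \in fiber h0 then U z0 * tilt_weight h0 else 0)); last first.
  move=> z _; rewrite coefZ coefXn (inj_eq (@pattern_code_inj N)) inE eq_sym.
  by case: eqP => [dz|]; rewrite ?mulr1 ?mulr0 // hF (hF z0) dz.
rewrite -big_mkcond sum_fiber_const => /eqP; rewrite !mulf_eq0 pnatr_eq0.
by rewrite eqn0Ngt card_fiber_disagree_gt0 (gt_eqF (tilt_weight_gt0 h0)) orbF => /eqP.
Qed.

End TiltedFamily.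

Section LehmannScheffe.
Variables (R : realType) (N : nat) (Theta : param R N -> Prop).
Hypothesis Theta_in_Rspace : forall th, Theta th -> in_Rspace th.
Hypothesis Theta_nondegenerate : nondegenerate_param Theta.
Implicit Types (T U V : sample N -> R) (th : param R N).

Theorem disagree_measurable_complete U : disagree_measurable U ->
  (forall th, Theta th -> expect th U = 0) -> forall z, U z = 0.
Proof.
move=> U_meas U_mean0; case: Theta_nondegenerate => p0 [eps [eps_gt0 ball]].
have p0_interior := nondegenerate_center_interior Theta_in_Rspace eps_gt0 ball.
pose K : R := (3 ^ N)%:R.
have K_gt0 : 0 < K by rewrite ltr0n expn_gt0.
apply: (tilted_poly_eq0 p0_interior U_meas).
apply: (@poly_eq0_on_interval _ _ (Num.max 0 (1 - eps / K)) 1).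
  by rewrite gt_max ltr01 gtrBl divr_gt0.
move=> u /andP[]; rewrite gt_max => /andP[u_gt0 u_near] u_le1.
have u01 : 0 <= u <= 1 by rewrite ltW.
have : Theta (tilted_param p0 u).
  apply: ball => i; apply: le_lt_trans (tilted_param_dist p0_interior i u01) _.
  by rewrite mulrC -ltr_pdivlMr // ltrBlDr addrC -ltrBlDr.
move/U_mean0; rewrite expect_tilted_param ?ltW // => /eqP.
by rewrite mulf_eq0 invr_eq0 (gt_eqF (tilt_normalizer_gt0 p0_interior (ltW u_gt0))) orbF => /eqP.
Qed.

Theorem measurable_unbiased_UMVU V g :
  disagree_measurable V -> unbiased Theta V g -> UMVU Theta V g.
Proof.
move=> V_meas V_unbiased; split=> // T T_unbiased th th_in.
have -> : V = balanced_variant T.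
  apply: funext => z; apply/eqP; rewrite -subr_eq0; apply/eqP.
  apply: (disagree_measurable_complete (U := fun z => V z - balanced_variant T z)).
    exact: (disagree_measurable_op2 (fun x y => x - y) V_meas (balanced_variant_measurable T)).
  move=> th' th'_in.
  by rewrite expectB expect_balanced_variant V_unbiased // T_unbiased // subrr.
exact: variance_balanced_variant (Theta_in_Rspace th_in).
Qed.

End LehmannScheffe.

Theorem corollary1 (R : realType) (N : nat) (hN : (0 < N)%N)
  (Theta : param R N -> Prop)
  (hTheta : forall th, Theta th -> in_Rspace th)
  (hnd : nondegenerate_param Theta)
  (S S' : sample N -> R) (g g' : param R N -> R) :
  unbiased Theta S g -> unbiased Theta S' g' ->
  forall a b : R,
    let Sb := balanced_variant S in
    let Sb' := balanced_variant S' in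
    UMVU Theta (fun z => a * Sb z + b * Sb' z) (fun th => a * g th + b * g' th)
    /\ balanced (fun z => a * Sb z + b * Sb' z)
    /\ balanced (fun z => Sb z * Sb' z)
    /\ ((forall z, Sb' z != 0) -> balanced (fun z => Sb z / Sb' z)).
Proof.
move=> S_unbiased S'_unbiased a b Sb Sb'.
have Sb_meas := balanced_variant_measurable S.
have Sb'_meas := balanced_variant_measurable S'.
have lin_meas : disagree_measurable (fun z => a * Sb z + b * Sb' z).
  exact: (disagree_measurable_op2 (fun x y => a * x + b * y) Sb_meas Sb'_meas).
split; [|split; [|split]].
- apply: measurable_unbiased_UMVU => // th th_in.
  by rewrite expect_lincomb !expect_balanced_variant S_unbiased // S'_unbiased.
- exact: measurable_balanced.
- exact/measurable_balanced/(disagree_measurable_op2 *%R).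
- (* Division is total, so the quotient is balanced even where [Sb'] vanishes. *)
  move=> _; exact/measurable_balanced/(disagree_measurable_op2 (fun x y => x / y)).
Qed.
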